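(* Let $\mathbb{X}$ be a two-dimensional real Banach space, $x_1,x_2\in S_{\mathbb{X}}$ and $\epsilon_1,\epsilon_2\in(0,1)$. If $F(x_1,\epsilon_1)=F(x_2,\epsilon_2)$, then $x_1=\pm x_2$ and $\epsilon_1=\epsilon_2$.
   Context: $S_{\mathbb{X}}$ is the unit sphere. For $x,y\in\mathbb{X}$ and $\epsilon\in[0,1)$, $x\perp_D^{\epsilon} y$ means $\|x+\lambda y\|\geq\sqrt{1-\epsilon^2}\,\|x\|$ for all $\lambda\in\mathbb{R}$; $F(x,\epsilon)=\{y\in\mathbb{X}: x\perp_D^{\epsilon}y\}$. *)

From HB Require Import structures.
From mathcomp Require Import all_boot all_order all_algebra.
From mathcomp Require Import all_classical all_reals all_analysis.
Set Implicit Arguments. Unset Strict Implicit. Unset Printing Implicit Defensive.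
Import Order.TTheory GRing.Theory Num.Theory.
Import numFieldNormedType.Exports.
Local Open Scope classical_set_scope.
Local Open Scope ring_scope.

Definition dim_two (R : realType) (X : normedModType R) : Prop :=
  exists e1 e2 : X,
    (forall x : X, exists a b : R, x = a *: e1 + b *: e2) /\
    (forall a b : R, a *: e1 + b *: e2 = 0 -> a = 0 /\ b = 0).

Definition unit_sphere (R : realType) (X : normedModType R) : set X :=
  [set x | `|x| = 1].

Definition eps_BJ_orth (R : realType) (X : normedModType R) (eps : R) (x y : X)
  : Prop :=
  forall lam : R, Num.sqrt (1 - eps ^+ 2) * `|x| <= `|x + lam *: y|.

Definition Fset (R : realType) (X : normedModType R) (x : X) (eps : R) : set X :=
  [set y | eps_BJ_orth eps x y].

Arguments dim_two {R} X.
Arguments unit_sphere {R} X _.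

From HB Require Import structures.
From mathcomp Require Import all_boot all_order all_algebra.
From mathcomp Require Import all_classical all_reals all_analysis.
From mathcomp Require Import ring lra.
Import Order.TTheory GRing.Theory Num.Theory.
Import numFieldNormedType.Exports.
Local Open Scope classical_set_scope.
Local Open Scope ring_scope.
Set Implicit Arguments. Unset Strict Implicit.

(* Fix a unit vector x and a vector v off the line R x. The vector v - c x
   spans the kernel of the functional f_c : a x + s v |-> a + c s, which is 1
   at x, so x is eps-orthogonal to v - c x exactly when ||f_c|| <= 1/d, where
   d = sqrt (1 - eps^2); [dual_le x v c r] states ||f_c|| <= r. As a function
   of c, ||f_c|| is Lipschitz and attains the value 1 (Hahn-Banach), so its
   sublevel sets are nondegenerate compact intervals.
   If x1, x2 were independent, take x = x1, v = x2: the hypothesis becomes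
   ||f_c|| <= 1/d1 <-> ||f_c|| <= |c|/d2, and the Lipschitz bound pushes an
   endpoint of this interval outward unless |c| = d2/d1. So the endpoints are
   -d2/d1 and d2/d1 and the interval contains 0, where the second condition
   fails. Hence x1 = +-x2, and then the sublevel sets at levels 1/d1 and 1/d2
   coincide; pushing the largest admissible c outward forces d1 = d2. *)

Lemma coord_bound {R : realType} {X : normedModType R} (x v : X) :
  `|x| = 1 -> (forall t : R, v + t *: x != 0) ->
  exists2 K : R, 0 < K & forall a s : R, `|s| <= K * `|a *: x + s *: v|.
Proof.
move=> x1 indep.
pose f t := `|v + t *: x|.
have f_cont : continuous f.
  move=> t; apply: (@continuous_comp _ _ _ (fun t : R => v + t *: x) Num.norm).
    by apply: continuousD; [exact: cst_continuous | exact: continuousZr_tmp].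
  exact: norm_continuous.
pose M := `|v| + 1.
have M_ge0 : 0 <= M by rewrite addr_ge0.
have [t0 _ t0_min] := EVT_min (ge0_cp M_ge0).2 (continuous_subspaceT f_cont).
pose m := Num.min (f t0) 1.
have m_gt0 : 0 < m by rewrite lt_min ltr01 andbT normr_gt0 indep.
have m_le t : m <= f t.
  rewrite ge_min; have [tM|Mt] := leP `|t| M.
    by rewrite t0_min // in_itv /= -ler_norml.
  apply/orP; right; rewrite /f addrC (le_trans _ (lerB_normD _ _)) //.
  by rewrite normrZ x1 mulr1; rewrite /M in Mt; lra.
exists m^-1; first by rewrite invr_gt0.
move=> a s; have [-> | s0] := eqVneq s 0.
  by rewrite normr0 mulr_ge0 // invr_ge0 ltW.
have -> : a *: x + s *: v = s *: (v + (a / s) *: x).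
  by rewrite scalerDr scalerA mulrCA divff // mulr1 addrC.
by rewrite normrZ ler_pdivlMl // mulrC ler_wpM2l // m_le.
Qed.

Section DualBound.
Context {R : realType} {X : normedModType R}.
Variables (x v : X).

Definition dual_le (c r : R) : Prop :=
  forall a s : R, `|a + c * s| <= r * `|a *: x + s *: v|.

Lemma dual_leW c r r' : r <= r' -> dual_le c r -> dual_le c r'.
Proof. by move=> le_rr' hc a s; rewrite (le_trans (hc a s)) // ler_wpM2r. Qed.

Lemma dual_le_norm c r : dual_le c r -> `|c| <= r * `|v|.
Proof. by move=> /(_ 0 1); rewrite add0r mulr1 scale0r add0r scale1r. Qed.

Lemma dual_le_convex c c' e r :
  dual_le c r -> dual_le c' r -> c <= e <= c' -> dual_le e r.
Proof.
move=> hc hc' /andP[ce ec'] a s; move: (hc a s) (hc' a s); rewrite !ler_norml.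
move=> /andP[lo hi] /andP[lo' hi']; rewrite -subr_ge0 in ce; rewrite -subr_ge0 in ec'.
have [s_ge0|s_lt0] := leP 0 s.
- have := mulr_ge0 ce s_ge0; have := mulr_ge0 ec' s_ge0.
  by move=> ? ?; apply/andP; split; nra.
- have := mulr_ge0_le0 ce (ltW s_lt0); have := mulr_ge0_le0 ec' (ltW s_lt0).
  by move=> ? ?; apply/andP; split; nra.
Qed.

Lemma exists_dual_le1 : `|x| = 1 -> exists c, dual_le c 1.
Proof.
move=> x1.
have gap a b : b - a <= `|a *: x + v| + `|b *: x + v|.
  have : `|(b *: x + v) - (a *: x + v)| = `|b - a|.
    by rewrite opprD addrACA subrr addr0 -scalerBl normrZ x1 mulr1.
  by have := ler_normB (b *: x + v) (a *: x + v); have := ler_norm (b - a); lra.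
pose S := [set y | exists a, y = - `|a *: x + v| - a].
have S_ne0 : S !=set0 by exists (- `|0 *: x + v| - 0), 0.
have supS : has_sup S.
  split=> //; exists (`|0 *: x + v| - 0) => _ [a ->].
  by have := gap a 0; lra.
have at_s1 a : `|a + sup S| <= `|a *: x + v|.
  have lo : - `|a *: x + v| - a <= sup S by apply: sup_upper_bound => //; exists a.
  have hi : sup S <= `|a *: x + v| - a.
    by apply: ge_sup => // _ [b ->]; have := gap b a; lra.
  by rewrite ler_norml; apply/andP; split; lra.
exists (sup S) => a s; rewrite mul1r.
have [-> | s0] := eqVneq s 0.
  by rewrite mulr0 addr0 scale0r addr0 normrZ x1 mulr1.
have -> : a + sup S * s = s * (a / s + sup S) by field.
have -> : a *: x + s *: v = s *: ((a / s) *: x + v).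
  by rewrite scalerDr scalerA mulrCA divff ?mulr1.
by rewrite normrM normrZ ler_wpM2l.
Qed.

Lemma dual_le_has_max c r : dual_le c r ->
  exists2 b, dual_le b r & forall c', dual_le c' r -> c' <= b.
Proof.
move=> hc; pose S := [set c' | dual_le c' r].
have supS : has_sup S.
  split; first by exists c.
  by exists (r * `|v|) => c' /dual_le_norm; apply: le_trans (ler_norm _).
exists (sup S); last by move=> c' hc'; exact: sup_upper_bound.
move=> a s; apply/ler_addgt0Pr => e e_gt0.
have s1_gt0 : 0 < `|s| + 1 by rewrite ltr_pwDr.
have [c' hc' lt_c'] := sup_adherent (divr_gt0 e_gt0 s1_gt0) supS.
have c'_le : c' <= sup S by exact: sup_upper_bound.
have -> : a + sup S * s = (a + c' * s) + (sup S - c') * s by ring.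
rewrite (le_trans (ler_normD _ _)) // lerD // normrM ger0_norm ?subr_ge0 //.
have : (sup S - c') * (`|s| + 1) < e by rewrite -ltr_pdivlMr //; lra.
by have := normr_ge0 s; nra.
Qed.

Variables (K : R).
Hypothesis coord_le : forall a s : R, `|s| <= K * `|a *: x + s *: v|.

Lemma dual_le_shift c r h : dual_le c r -> dual_le (c + h) (r + K * `|h|).
Proof.
move=> hc a s.
have -> : a + (c + h) * s = (a + c * s) + h * s by ring.
rewrite (le_trans (ler_normD _ _)) // mulrDl lerD //.
by rewrite normrM (mulrC K) -mulrA ler_wpM2l.
Qed.

Lemma dual_le_level_inj r1 r2 : `|x| = 1 -> 0 < K -> 1 <= r1 -> 1 <= r2 ->
  (forall c, dual_le c r1 <-> dual_le c r2) -> r1 = r2.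
Proof.
move=> x1 K_gt0.
wlog r21 : r1 r2 / r2 <= r1 => [wlog_le r1_ge1 r2_ge1 E | r1_ge1 r2_ge1 E].
  have [le21|/ltW le12] := leP r2 r1; first exact: wlog_le.
  by apply: esym; apply: wlog_le => // c; apply: iff_sym.
apply/eqP; rewrite eq_le r21 andbT leNgt; apply/negP => lt21.
have [c0 hc0] := exists_dual_le1 x1.
have [b hb b_max] := dual_le_has_max (dual_leW r1_ge1 hc0).
pose h := (r1 - r2) / K.
have h_gt0 : 0 < h by rewrite divr_gt0 // subr_gt0.
have : dual_le (b + h) r1.
  apply: dual_leW (dual_le_shift h ((E b).1 hb)).
  by rewrite gtr0_norm // mulrC divfK ?gt_eqF // addrC subrK.
by move/b_max; rewrite gerDl leNgt h_gt0.
Qed.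

Lemma dual_le_abs_level_interior r1 r2 c : 0 < K -> 0 < r2 ->
  (forall c, dual_le c r1 <-> dual_le c (`|c| * r2)) ->
  dual_le c r1 -> `|c| * r2 != r1 ->
  exists2 h, 0 < h & forall h', `|h'| <= h -> dual_le (c + h') r1.
Proof.
move=> K_gt0 r2_gt0 E hc; rewrite neq_lt => /orP[lt|gt].
- exists ((r1 - `|c| * r2) / K); first by rewrite divr_gt0 // subr_gt0.
  move=> h' h'_le; apply: dual_leW (dual_le_shift h' ((E c).1 hc)).
  by rewrite -lerBrDl mulrC -ler_pdivlMr.
- exists ((`|c| * r2 - r1) / (K + r2)); first by rewrite divr_gt0 ?subr_gt0 ?addr_gt0.
  move=> h' h'_le; apply/E; apply: dual_leW (dual_le_shift h' hc).
  rewrite ler_pdivlMr ?addr_gt0 // in h'_le.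
  by have := ler_wpM2r (ltW r2_gt0) (lerB_normD c h'); nra.
Qed.

End DualBound.

Lemma dual_le_oppv {R : realType} {X : normedModType R} (x v : X) c r :
  dual_le x (- v) c r <-> dual_le x v (- c) r.
Proof.
by split=> h a s; have := h a (- s); rewrite ?(mulrN, mulNr, scaleNr, scalerN, opprK).
Qed.

Lemma dual_le_has_min {R : realType} {X : normedModType R} (x v : X) c r :
  dual_le x v c r ->
  exists2 b, dual_le x v b r & forall c', dual_le x v c' r -> b <= c'.
Proof.
rewrite -[c]opprK -dual_le_oppv => /dual_le_has_max[b hb b_max].
exists (- b); first by rewrite -dual_le_oppv.
by move=> c' hc'; rewrite lerNl; apply: b_max; rewrite dual_le_oppv opprK.
Qed.

Lemma dual_le_abs_level_absurd {R : realType} {X : normedModType R}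
    (x v : X) K r1 r2 :
  `|x| = 1 -> 0 < K -> (forall a s : R, `|s| <= K * `|a *: x + s *: v|) ->
  1 < r1 -> 0 < r2 -> ~ (forall c, dual_le x v c r1 <-> dual_le x v c (`|c| * r2)).
Proof.
move=> x1 K_gt0 coord_le r1_gt1 r2_gt0 E.
have [c0 hc0] := exists_dual_le1 v x1.
pose h := (r1 - 1) / K.
have h_gt0 : 0 < h by rewrite divr_gt0 // subr_gt0.
have hc0h : dual_le x v (c0 + h) r1.
  apply: dual_leW (dual_le_shift coord_le h hc0).
  by rewrite gtr0_norm // mulrC divfK ?gt_eqF // addrC subrK.
have [b hb b_max] := dual_le_has_max hc0h.
have [a ha a_min] := dual_le_has_min hc0h.
have b_edge : `|b| * r2 = r1.
  apply/eqP/contraT => ne.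
  have [h' h'_gt0 nbhd] := dual_le_abs_level_interior coord_le K_gt0 r2_gt0 E hb ne.
  have h'_le : `|h'| <= h' by rewrite gtr0_norm.
  by have := b_max _ (nbhd h' h'_le); rewrite gerDl leNgt h'_gt0.
have a_edge : `|a| * r2 = r1.
  apply/eqP/contraT => ne.
  have [h' h'_gt0 nbhd] := dual_le_abs_level_interior coord_le K_gt0 r2_gt0 E ha ne.
  have h'_le : `|- h'| <= h' by rewrite normrN gtr0_norm.
  by have := a_min _ (nbhd (- h') h'_le); rewrite lerDl oppr_ge0 leNgt h'_gt0.
have ab : a < b.
  have hc0' := dual_leW (ltW r1_gt1) hc0.
  by rewrite (le_lt_trans (a_min _ hc0')) // (lt_le_trans _ (b_max _ hc0h)) // ltrDl.
have abs_ab : `|a| = `|b| by apply: (mulIf (lt0r_neq0 r2_gt0)); rewrite a_edge b_edge.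
have h0 : dual_le x v 0 r1.
  apply: dual_le_convex ha hb _; move: abs_ab ab.
  by case: (ler0P a) => a0; case: (ler0P b) => b0 eq ab; apply/andP; split; lra.
have := (E 0).1 h0 1 0.
by rewrite mul0r addr0 normr1 normr0 !mul0r ler10.
Qed.

Section BJOrthogonality.
Context {R : realType} {X : normedModType R}.

Lemma eps_BJ_orthE (eps : R) (x y : X) : `|x| = 1 ->
  eps_BJ_orth eps x y <->
  forall al mu : R, Num.sqrt (1 - eps ^+ 2) * `|al| <= `|al *: x + mu *: y|.
Proof.
move=> x1; split=> [orth al mu | h lam]; last first.
  by have := h 1 lam; rewrite normr1 scale1r x1.
have [-> | al0] := eqVneq al 0; first by rewrite normr0 mulr0.
have -> : al *: x + mu *: y = al *: (x + (mu / al) *: y).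
  by rewrite scalerDr scalerA mulrCA divff ?mulr1.
by rewrite normrZ mulrC ler_wpM2l //; have := orth (mu / al); rewrite x1 mulr1.
Qed.

Lemma Fset_lineE (x v : X) (eps c : R) : `|x| = 1 -> 0 < Num.sqrt (1 - eps ^+ 2) ->
  Fset x eps (v - c *: x) <-> dual_le x v c (Num.sqrt (1 - eps ^+ 2))^-1.
Proof.
move=> x1 d_gt0; rewrite /Fset /= eps_BJ_orthE //.
have lin al mu : al *: x + mu *: (v - c *: x) = (al - c * mu) *: x + mu *: v.
  by rewrite scalerBr scalerA scalerBl addrA addrAC mulrC.
split=> [h a s | h al mu].
  rewrite ler_pdivlMl //; have := h (a + c * s) s.
  by rewrite lin addrK.
rewrite lin; have := h (al - c * mu) mu.
by rewrite subrK ler_pdivlMl.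
Qed.

Lemma Fset_base_lineE (x y : X) (eps c : R) : `|y| = 1 -> 0 < Num.sqrt (1 - eps ^+ 2) ->
  Fset y eps (y - c *: x) <-> dual_le x y c (`|c| / Num.sqrt (1 - eps ^+ 2)).
Proof.
move=> y1 d_gt0; rewrite /Fset /= eps_BJ_orthE //; set d := Num.sqrt _ in d_gt0 *.
have lin al mu : al *: y + mu *: (y - c *: x) = (- (c * mu)) *: x + (al + mu) *: y.
  by rewrite scalerBr scalerA scaleNr scalerDl addrA addrC mulrC.
have [-> | c0] := eqVneq c 0.
  split=> h; exfalso.
    have := h 1 (-1).
    by rewrite scale0r subr0 scale1r scaleN1r subrr normr0 normr1 mulr1 leNgt d_gt0.
  by have := h 1 0; rewrite mulr0 addr0 normr1 normr0 !mul0r ler10.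
split=> [h a s | h al mu].
  have := h ((a + c * s) / c) (- a / c); rewrite lin.
  have -> : - (c * (- a / c)) = a by field.
  have -> : (a + c * s) / c + - a / c = s by field.
  rewrite normrM normrV ?unitfE // mulrA ler_pdivrMr ?normr_gt0 // => le.
  by rewrite mulrAC ler_pdivlMr // mulrC (mulrC `|c|).
have := h (- (c * mu)) (al + mu); rewrite lin.
have -> : - (c * mu) + c * (al + mu) = c * al by ring.
by rewrite normrM mulrAC ler_pdivlMr // -mulrA ler_pM2l ?normr_gt0 // mulrC.
Qed.

Lemma Fset_opp (x : X) (eps : R) : Fset (- x) eps = Fset x eps.
Proof.
have half (z : X) : Fset (- z) eps `<=` Fset z eps.
  move=> y /= orth lam; have := orth (- lam).
  by rewrite normrN scaleNr -opprD normrN.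
by apply/seteqP; split; [exact: half | rewrite -{1}(opprK x); exact: half].
Qed.

Lemma unit_colinear (x y : X) (t : R) : `|x| = 1 -> `|y| = 1 ->
  y + t *: x = 0 -> x = y \/ x = - y.
Proof.
move=> x1 y1 /eqP; rewrite addr_eq0 => /eqP y_eq.
have : `|t| = 1 by move: y1; rewrite y_eq normrN normrZ x1 mulr1.
case: (ler0P t) => _ t1.
  by left; rewrite y_eq -scaleNr t1 scale1r.
by right; rewrite y_eq t1 scale1r opprK.
Qed.

Lemma exists_not_in_line (x : X) : dim_two X -> x != 0 ->
  exists v : X, forall t : R, v + t *: x != 0.
Proof.
move=> [e1 [e2 [span indep]]] x0.
have on_line e : (forall t : R, e + t *: x != 0) \/ exists t : R, e = t *: x.
  have [[t et] | off] := pselect (exists t : R, e + t *: x = 0).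
    by right; exists (- t); apply/eqP; rewrite scaleNr -addr_eq0 et.
  by left=> t; apply/eqP=> et; apply: off; exists t.
case: (on_line e1) => [|[t1 e1t]]; first by exists e1.
case: (on_line e2) => [|[t2 e2t]]; first by exists e2.
have [t2_0 /eqP] : t2 = 0 /\ - t1 = 0.
  by apply: indep; rewrite e1t e2t !scalerA mulrC mulNr scaleNr addrN.
rewrite oppr_eq0 => /eqP t1_0.
have [a [b x_eq]] := span x.
by move: x0; rewrite x_eq e1t e2t t1_0 t2_0 !scale0r !scaler0 addr0 eqxx.
Qed.

End BJOrthogonality.

Lemma BJ_const_01 {R : realType} (eps : R) :
  0 < eps < 1 -> 0 < Num.sqrt (1 - eps ^+ 2) < 1.
Proof.
case/andP=> eps_gt0 eps_lt1.
have pos : 0 < 1 - eps ^+ 2 by rewrite subr_gt0 expr2; nra.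
by rewrite sqrtr_gt0 pos /= -{2}sqrtr1 ltr_sqrt // gtrDl oppr_lt0 exprn_gt0.
Qed.

Lemma BJ_const_inj {R : realType} (eps1 eps2 : R) : 0 < eps1 < 1 -> 0 < eps2 < 1 ->
  Num.sqrt (1 - eps1 ^+ 2) = Num.sqrt (1 - eps2 ^+ 2) -> eps1 = eps2.
Proof.
move=> /andP[e1_gt0 e1_lt1] /andP[e2_gt0 e2_lt1] /eqP.
by rewrite eqr_sqrt ?subr_ge0 ?expr2 => [/eqP||]; nra.
Qed.

Unset Implicit Arguments. Set Strict Implicit.

Theorem theorem2p5 (R : realType) (X : completeNormedModType R)
  (x1 x2 : X) (eps1 eps2 : R) :
  dim_two X ->
  unit_sphere X x1 -> unit_sphere X x2 ->
  0 < eps1 < 1 -> 0 < eps2 < 1 ->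
  Fset x1 eps1 = Fset x2 eps2 ->
  (x1 = x2 \/ x1 = - x2) /\ eps1 = eps2.
Proof.
move=> dim x1_unit x2_unit eps1_01 eps2_01 F12.
rewrite /unit_sphere /= in x1_unit x2_unit.
have /andP[d1_gt0 d1_lt1] := BJ_const_01 eps1_01.
have /andP[d2_gt0 d2_lt1] := BJ_const_01 eps2_01.
set d1 := Num.sqrt _ in d1_gt0 d1_lt1; set d2 := Num.sqrt _ in d2_gt0 d2_lt1.
have x12 : x1 = x2 \/ x1 = - x2.
  have [[t x21] | indep] := pselect (exists t : R, x2 + t *: x1 = 0).
    exact: unit_colinear x1_unit x2_unit x21.
  have {}indep t : x2 + t *: x1 != 0 by apply/eqP => x21; apply: indep; exists t.
  have [K K_gt0 coord_le] := coord_bound x1_unit indep.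
  have E c : dual_le x1 x2 c d1^-1 <-> dual_le x1 x2 c (`|c| / d2).
    by rewrite -Fset_lineE // F12 Fset_base_lineE.
  have d1V_gt1 : 1 < d1^-1 by rewrite invf_gt1.
  have d2V_gt0 : 0 < d2^-1 by rewrite invr_gt0.
  by have := dual_le_abs_level_absurd x1_unit K_gt0 coord_le d1V_gt1 d2V_gt0.
split=> //.
have F11 : Fset x1 eps1 = Fset x1 eps2 by case: x12 F12 => ->; rewrite ?Fset_opp.
have x1_neq0 : x1 != 0 by rewrite -normr_eq0 x1_unit oner_eq0.
have [v indep] := exists_not_in_line dim x1_neq0.
have [K K_gt0 coord_le] := coord_bound x1_unit indep.
have E c : dual_le x1 v c d1^-1 <-> dual_le x1 v c d2^-1.
  by rewrite -!Fset_lineE // F11.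
apply: BJ_const_inj eps1_01 eps2_01 _; apply: invr_inj.
by apply: (dual_le_level_inj coord_le x1_unit K_gt0 _ _ E); rewrite invf_ge1 ?ltW.
Qed.
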